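(* Let $I\ge1$, $\eta>0$, $\lambda^*\in(0,\infty)^I$, $\alpha\in(0,\infty)^I$, $\hat\alpha=\sum_{i=1}^I1/\alpha_i$, $h_0\ge0$ and $h_1,\dots,h_I$ with $h_i>h_0$ for all $i$, $c\in\mathbb{R}_+^I$, and set $h=\min_i h_i-h_0$ and $r=\min_i c_i/\lambda_i^*$. Let $\chi$ be a one-dimensional Brownian motion with drift $a$, variance $\sigma^2$ and $\chi(0)\ge0$. (RBCP) A policy is a triple $(Z,U,\zeta)$ of $I$-dimensional processes nonanticipating with respect to $\chi$ such that, with $W(t)=\sum_{i=1}^IZ_i(t)$, $$W(t)=\chi(t)-\eta\int_0^tW(s)ds-\int_0^t\sum_{i=1}^I\zeta_i(s)ds+\sum_{i=1}^I\lambda_i^*U_i(t),\quad t\ge0,$$ $Z(t)\ge0$ for $t\ge0$, and $U$ is nondecreasing with $U(0)=0$; its cost is $\limsup_{t\to\infty}\frac1tE[\int_0^t(\sum_i\alpha_i\zeta_i(s)^2+\sum_i(h_i-h_0)Z_i(s))ds+c'U(t)]$. (EWF) A policy is a real-valued process $\theta$ nonanticipating with respect to $\chi$ such that, for some process $L$ that is nondecreasing with $L(0)=0$, the process $W(t)=\chi(t)-\eta\int_0^tW(s)ds-\int_0^t\theta(s)ds+L(t)$ satisfies $W(t)\ge0$ for $t\ge0$; its cost is $\limsup_{t\to\infty}\frac1tE[\int_0^t(\theta(s)^2/\hat\alpha+hW(s))ds+rL(t)]$. Then every admissible policy $\theta$ for the EWF yields an admissible policy $(Z,U,\zeta)$ for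 the RBCP with the same cost; and for every admissible policy $(Z,U,\zeta)$ of the RBCP there exists an admissible policy $\theta$ for the EWF whose cost is less than or equal to that of $(Z,U,\zeta)$ for the RBCP. *)

From HB Require Import structures.
From mathcomp Require Import all_boot all_order all_algebra.
From mathcomp Require Import all_classical all_reals all_analysis.
From mathcomp Require Import normal_distribution.

Set Implicit Arguments.
Unset Strict Implicit.
Unset Printing Implicit Defensive.

Import Order.TTheory GRing.Theory Num.Theory.
Import numFieldNormedType.Exports.

Local Open Scope classical_set_scope.
Local Open Scope ring_scope.

Section Defs.
Context {R : realType} {d : measure_display} {Omega : measurableType d}.

(* A (real-valued, time-indexed) process: time t : R (only t >= 0 matters). *)
Definition process := R -> Omega -> R.

Definition chi_gen (chi : process) (t : R) : set (set Omega) :=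
  [set A | exists s B, [/\ 0 <= s <= t, measurable B & A = chi s @^-1` B]].

Definition chi_filt (chi : process) (t : R) : set (set Omega) :=
  <<s chi_gen chi t >>.

(* Nonanticipating with respect to chi: progressively measurable with respect
   to the natural filtration of chi, i.e. for every t >= 0 the map
   (s, w) |-> X s w on [0,t] x Omega is B(R) (x) F_t-measurable. *)
Definition nonanticipating (chi : process) (X : process) : Prop :=
  forall t : R, 0 <= t -> forall B : set R, measurable B ->
    <<s [set E : set (R * Omega) | exists A F,
           [/\ measurable A, chi_filt chi t F & E = A `*` F]] >>
      [set p : R * Omega | 0 <= p.1 <= t /\ B (X p.1 p.2)].

(* chi is a one-dimensional Brownian motion with drift a, variance sigma^2
   (sigma > 0 is the standard deviation per unit time), started at a
   nonnegative (possibly random) value chi(0). *)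
Definition brownian_motion (P : probability Omega R) (chi : process) (a sigma : R)
    : Prop :=
  [/\ forall w, 0 <= chi 0 w,
      forall t, measurable_fun setT (chi t),
      forall w, {within [set t : R | 0 <= t], continuous (fun t => chi t w)},
      forall s t, 0 <= s -> s < t -> forall B : set R, measurable B ->
        P ((fun w => chi t w - chi s w) @^-1` B)
        = normal_prob (a * (t - s)) (sigma * Num.sqrt (t - s)) B
    &
      forall s t, 0 <= s -> s < t -> forall B : set R, measurable B ->
      forall A, chi_filt chi s A ->
        P ((fun w => (chi t w - chi s w)%R) @^-1` B `&` A)
        = (P ((fun w => (chi t w - chi s w)%R) @^-1` B) * P A)%E].

Definition pint (X : process) (t : R) (w : Omega) : R :=
  Rintegral lebesgue_measure `[0, t] (fun s => X s w).

Definition loc_integrable (X : process) : Prop :=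
  forall w t, 0 <= t ->
    lebesgue_measure.-integrable `[0, t] (fun s => (X s w)%:E).

Definition nondecr_from0 (X : process) : Prop :=
  (forall w, X 0 w = 0) /\
  (forall w s t, 0 <= s -> s <= t -> X s w <= X t w).

Definition limsup_oo (f : R -> \bar R) : \bar R :=
  limf_esup f (pinfty_nbhs R).

Variable n : nat. (* I = n.+1 >= 1 classes, indexed by 'I_n.+1 *)

Definition rbcp_admissible (chi : process) (eta : R) (lam : 'I_n.+1 -> R)
    (Z U zeta : 'I_n.+1 -> process) : Prop :=
  let W := fun s w => \sum_(i < n.+1) Z i s w in
  [/\ (forall i, nonanticipating chi (Z i)) /\
        (forall i, nonanticipating chi (U i)) /\
        (forall i, nonanticipating chi (zeta i)),
      (loc_integrable W /\ (forall i, loc_integrable (zeta i))),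
      forall w t, 0 <= t ->
        W t w = chi t w - eta * pint W t w
                - pint (fun s w => \sum_(i < n.+1) zeta i s w) t w
                + \sum_(i < n.+1) lam i * U i t w,
      forall i w t, 0 <= t -> 0 <= Z i t w
    & forall i, nondecr_from0 (U i)].

Definition rbcp_cost (P : probability Omega R) (alpha hh : 'I_n.+1 -> R) (h0 : R)
    (c : 'I_n.+1 -> R) (Z U zeta : 'I_n.+1 -> process) : \bar R :=
  limsup_oo (fun t =>
    (t^-1)%:E *
    \int[P]_w ((\int[lebesgue_measure]_(s in `[0%R, t])
                  (\sum_(i < n.+1) alpha i * zeta i s w ^+ 2
                   + \sum_(i < n.+1) (hh i - h0) * Z i s w)%R%:E)
               + (\sum_(i < n.+1) c i * U i t w)%R%:E))%E.

(* An EWF policy theta, together with the process L (required nondecreasing,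
   L(0)=0, nonanticipating) and the resulting workload W. *)
Definition ewf_admissible (chi : process) (eta : R) (theta L W : process) : Prop :=
  [/\ nonanticipating chi theta /\ nonanticipating chi L,
      (loc_integrable W /\ loc_integrable theta),
      forall w t, 0 <= t ->
        W t w = chi t w - eta * pint W t w - pint theta t w + L t w,
      forall w t, 0 <= t -> 0 <= W t w
    & nondecr_from0 L].

Definition ewf_cost (P : probability Omega R) (ahat h r : R) (theta L W : process)
    : \bar R :=
  limsup_oo (fun t =>
    (t^-1)%:E *
    \int[P]_w ((\int[lebesgue_measure]_(s in `[0%R, t])
                  (theta s w ^+ 2 / ahat + h * W s w)%R%:E)
               + (r * L t w)%R%:E))%E.

End Defs.

Definition alpha_hat {R : realType} (n : nat) (alpha : 'I_n.+1 -> R) : R :=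
  \sum_(i < n.+1) (alpha i)^-1.

Definition h_min {R : realType} (n : nat) (hh : 'I_n.+1 -> R) (h0 : R) : R :=
  \big[Order.min/hh ord0]_(i < n.+1) hh i - h0.

Definition r_min {R : realType} (n : nat) (c lam : 'I_n.+1 -> R) : R :=
  \big[Order.min/(c ord0 / lam ord0)]_(i < n.+1) (c i / lam i).

From HB Require Import structures.
From mathcomp Require Import all_boot all_order all_algebra.
From mathcomp Require Import all_classical all_reals all_analysis.
From mathcomp Require Import normal_distribution measurable_realfun.
From mathcomp Require Import ring.
Import Order.TTheory GRing.Theory Num.Theory.
Import numFieldNormedType.Exports.

(* An EWF policy theta, with idling L and workload W, becomes an RBCP policy
   by keeping the whole workload in a class i with minimal h_i, idling only a
   class j with minimal c_j / lambda_j, and splitting the drift control as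
   zeta_i = theta / (alpha_i alpha_hat).  This split is the equality case of
   the weighted Cauchy-Schwarz inequality
   (sum_i zeta_i)^2 / alpha_hat <= sum_i alpha_i zeta_i^2,
   so both costs coincide term by term.  Conversely, aggregating an RBCP policy
   (theta = sum zeta, L = sum lambda U, W = sum Z) gives an EWF policy, whose
   running costs are pathwise smaller by the same inequality and by
   h <= h_i - h_0, r lambda_i <= c_i.

   The one analytic point is that the EWF workload, which becomes a queue
   length, is nonanticipating.  It solves the linear Volterra equation
   W = Y - eta int_0 W with Y = chi - int_0 theta + L progressively measurable,
   hence is the pointwise limit of its Picard iterates; these are
   progressively measurable because a time integral of a progressively
   measurable process is measurable in w (Tonelli) and continuous in time. *)

Set Implicit Arguments.
Unset Strict Implicit.
Unset Printing Implicit Defensive.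

Local Open Scope classical_set_scope.
Local Open Scope ring_scope.

Lemma cvg_within_continuous {R : realType} (f : R -> R) (A : set R) x (u : nat -> R) :
  {within A, continuous f} -> A x -> (forall m, A (u m)) ->
  u @ \oo --> x -> (fun m => f (u m)) @ \oo --> f x.
Proof.
move=> /subspace_continuousP cf Ax uA ux.
apply: (cvg_comp _ _ _ (cf x Ax)) => P /=; rewrite nbhs_simpl => Pn.
have [N _ HN] := ux _ Pn; exists N => // m Nm /=.
by apply: (HN m Nm); exact: uA.
Qed.

(* No integrability is needed: [Rintegral] is [fine] of [int g^+ - int g^-],
   and both integrals are measurable in [y] by Tonelli. *)
Lemma measurable_fun_Rintegral_param d1 d2 (T1 : measurableType d1)
    (T2 : measurableType d2) (R : realType) (mu : {sigma_finite_measure set T1 -> \bar R})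
    (D : set T1) (f : T1 * T2 -> R) :
  measurable D -> measurable_fun (D `*` setT) f ->
  measurable_fun setT (fun y => Rintegral mu D (fun x => f (x, y))).
Proof.
move=> mD mf; pose g := EFin \o f \_ (D `*` setT).
have mDT : measurable (D `*` setT : set (T1 * T2)) by exact: measurableX.
have mg : measurable_fun setT g.
  by apply/measurable_EFinP; apply/(measurable_restrictT _ mDT).
have mGp := @measurable_fun_fubini_tonelli_G _ _ _ T2 _ mu _
  (measurable_funepos mg) (fun x => funepos_ge0 _ x).
have mGn := @measurable_fun_fubini_tonelli_G _ _ _ T2 _ mu _
  (measurable_funeneg mg) (fun x => funeneg_ge0 _ x).
have -> : (fun y => Rintegral mu D (fun x => f (x, y))) =
    fine \o (fubini_G mu g^\+ \- fubini_G mu g^\-)%E.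
  apply: funext => y; rewrite /Rintegral integralE /fubini_G /=.
  congr (fine (_ - _)); rewrite integral_mkcond; apply: eq_integral => x _;
    rewrite /g /patch !(funeposE, funenegE) /= in_setX in_setT andbT;
    case: ifPn => // _.
  - by rewrite /= maxxx.
  - by rewrite /= oppr0 maxxx.
exact: measurableT_comp (fine_measurable measurableT) (emeasurable_funB mGp mGn).
Qed.

Section uniform_grid.
Context {R : realType}.
Variable t : R.
Hypothesis t_gt0 : 0 < t.

Definition grid (m j : nat) : R := j%:R * t / m.+1%:R.

Definition grid_index (m : nat) (s : R) : nat := Num.truncn (s * (m.+1%:R / t)).

Let mesh_inv_gt0 m : 0 < m.+1%:R / t.
Proof. by rewrite divr_gt0. Qed.

Lemma grid_cellE m j s :
  (grid m j <= s < grid m j.+1) = (j%:R <= s * (m.+1%:R / t) < j.+1%:R).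
Proof.
have gridE k : grid m k = k%:R / (m.+1%:R / t) by rewrite invf_div mulrA.
have c0 := mesh_inv_gt0 m.
by rewrite !gridE ler_pdivrMr // ltr_pdivlMr.
Qed.

Lemma grid_index_cell m s : 0 <= s ->
  grid m (grid_index m s) <= s < grid m (grid_index m s).+1.
Proof. by move=> s0; rewrite grid_cellE; apply: truncn_itv; rewrite mulr_ge0 // ltW. Qed.

Lemma grid_index_unique m j s : grid m j <= s < grid m j.+1 -> grid_index m s = j.
Proof. by rewrite grid_cellE => /truncn_def. Qed.

Lemma grid_itv m j : (j <= m.+1)%N -> 0 <= grid m j <= t.
Proof.
move=> jm; rewrite /grid divr_ge0 ?mulr_ge0 ?(ltW t_gt0) //=.
by rewrite ler_pdivrMr // mulrC ler_pM2l // ler_nat.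
Qed.

Lemma grid_index_lt m s : 0 <= s <= t -> (grid_index m s < m.+2)%N.
Proof.
move=> /andP[s0 st]; have c0 := mesh_inv_gt0 m.
rewrite ltnS -(ler_nat R); have /andP[+ _] := truncn_itv (mulr_ge0 s0 (ltW c0)).
move/le_trans; apply; rewrite -[leRHS](divfK (lt0r_neq0 t_gt0)).
by rewrite [leRHS]mulrC ler_pM2r.
Qed.

Lemma cvg_grid_floor s : 0 <= s -> (fun m => grid m (grid_index m s)) @ \oo --> s.
Proof.
move=> s0; have cell m := grid_index_cell m s0.
apply: (@squeeze_cvgr _ _ _ _ (fun m => s - t * harmonic m) (fun _ => s)); last 2 first.
- rewrite -[X in _ --> X]subr0 -(mulr0 t).
  exact: cvgB (cvg_cst _) (cvgM (cvg_cst _) cvg_harmonic).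
- exact: cvg_cst.
apply: nearW => m; case/andP: (cell m) => -> /ltW; rewrite andbT lerBlDr.
suff -> : grid m (grid_index m s).+1 = grid m (grid_index m s) + t * harmonic m by [].
by rewrite /grid /harmonic /= -[(grid_index m s).+1]addn1 natrD mulrDl mul1r mulrDl.
Qed.

End uniform_grid.

Section progressive_measurability.
Context {R : realType} {d : measure_display} {Omega : measurableType d}.
Variable chi : R -> Omega -> R.
Implicit Types X Y : R -> Omega -> R.

(* [Omega] with the sigma-algebra [chi_filt chi t] of the past of [chi] *)
Definition filtered_at (t : R) := g_sigma_algebraType (chi_gen chi t).

Definition prog_measurable X (t : R) :=
  measurable_fun (T := (R * filtered_at t)%type) (`[0, t] `*` setT)
    (fun p : R * filtered_at t => X p.1 p.2).

Let measurable_window t : measurable (`[0, t] `*` setT : set (R * filtered_at t)).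
Proof. by apply: measurableX => //; exact: measurable_itv. Qed.

Let measurable_filtered_prod t :
  @measurable _ (R * filtered_at t)%type =
  <<s [set E : set (R * Omega) | exists A F,
           [/\ measurable A, chi_filt chi t F & E = A `*` F]] >>.
Proof.
rewrite measurable_prod_measurableType; congr (<<s _ >>).
apply/seteqP; split.
  by move=> _ [A mA] [B mB] <-; exists A, B.
by move=> _ [A [F [mA mF ->]]]; exists A => //; exists F.
Qed.

Lemma nonanticipatingP X :
  nonanticipating chi X <-> (forall t, 0 <= t -> prog_measurable X t).
Proof.
have windowE t B : `[0, t] `*` setT `&` (fun p : R * filtered_at t => X p.1 p.2) @^-1` B =
   [set p : R * Omega | 0 <= p.1 <= t /\ B (X p.1 p.2)].
  apply/seteqP; split => [[s w] [[/= + _] /= Bx]|[s w] /= [st Bx]].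
    by rewrite in_itv /=.
  by split => //; split => //=; rewrite in_itv.
split => [nX t t0 _ B mB|pX t t0 B mB].
  by rewrite windowE measurable_filtered_prod; exact: nX.
by rewrite -measurable_filtered_prod -windowE; exact: (pX t t0).
Qed.

Section fixed_time.
Variable t : R.

Lemma eq_prog_measurable X Y : (forall s w, 0 <= s <= t -> X s w = Y s w) ->
  prog_measurable X t -> prog_measurable Y t.
Proof.
move=> XY; apply: eq_measurable_fun => -[s w]; rewrite inE /= => -[+ _].
by rewrite in_itv /= => /XY.
Qed.

Lemma prog_measurableD X Y : prog_measurable X t -> prog_measurable Y t ->
  prog_measurable (fun s w => X s w + Y s w) t.
Proof. exact: measurable_funD. Qed.

Lemma prog_measurableM X Y : prog_measurable X t -> prog_measurable Y t ->
  prog_measurable (fun s w => X s w * Y s w) t.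
Proof. exact: measurable_funM. Qed.

Lemma prog_measurable_cst k : prog_measurable (fun _ _ => k) t.
Proof. exact: measurable_cst. Qed.

Lemma prog_measurableZ k X : prog_measurable X t ->
  prog_measurable (fun s w => k * X s w) t.
Proof. by apply: prog_measurableM; exact: prog_measurable_cst. Qed.

Lemma prog_measurable_sum (I : Type) (r : seq I) (P : pred I) (X : I -> R -> Omega -> R) :
  (forall i, prog_measurable (X i) t) ->
  prog_measurable (fun s w => \sum_(i <- r | P i) X i s w) t.
Proof.
move=> mX; rewrite /prog_measurable.
have -> : (fun p : R * filtered_at t => \sum_(i <- r | P i) X i p.1 p.2) =
  (fun p => \sum_(i <- r) (if P i then X i p.1 p.2 else 0)).
  by apply: funext => p; rewrite big_mkcond.
by apply: measurable_sum => i; case: (P i); [exact: mX|exact: measurable_cst].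
Qed.

Lemma prog_measurable_cvg (X_ : nat -> R -> Omega -> R) X :
  (forall k, prog_measurable (X_ k) t) ->
  (forall s w, 0 <= s <= t -> (fun k => X_ k s w) @ \oo --> X s w) ->
  prog_measurable X t.
Proof.
move=> mX cX.
apply: (measurable_fun_cvg (h := fun k (p : R * filtered_at t) => X_ k p.1 p.2)) => //.
move=> -[s w] /= [+ _].
by rewrite in_itv /=; exact: cX.
Qed.

Lemma prog_measurable_time (f : R -> R) : measurable_fun setT f ->
  prog_measurable (fun s _ => f s) t.
Proof. by move=> mf; apply: measurable_funS (subsetT _) (measurableT_comp mf measurable_fst). Qed.

Lemma prog_measurable_state (g : filtered_at t -> R) : measurable_fun setT g ->
  prog_measurable (fun _ w => g w) t.
Proof. by move=> mg; apply: measurable_funS (subsetT _) (measurableT_comp mg measurable_snd). Qed.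

End fixed_time.

(* Approximate [X] by step processes on a uniform grid: finite sums of
   deterministic indicators times F_t-measurable variables. *)
Lemma prog_measurable_continuous X t : 0 <= t ->
  (forall u, 0 <= u <= t -> measurable_fun (T := filtered_at t) setT (X u)) ->
  (forall w, {within `[0, t], continuous (fun u => X u w)}) -> prog_measurable X t.
Proof.
rewrite le_eqVlt => /predU1P[<-|t_gt0] mX cX.
  apply: (@eq_prog_measurable _ (fun _ w => X 0 w)).
    by move=> s w s0; rewrite (_ : s = 0) //; apply/eqP; rewrite eq_le andbC.
  by apply: prog_measurable_state; apply: mX; rewrite lexx.
pose step m s w := \sum_(j < m.+2)
  \1_(`[grid t m j, grid t m j.+1[ : set R) s * X (grid t m j) w.
have stepE m s w : 0 <= s <= t -> step m s w = X (grid t m (grid_index t m s)) w.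
  move=> sI; rewrite /step (bigD1 (Ordinal (grid_index_lt t_gt0 m sI))) //=.
  rewrite big1 ?addr0 => [|j]; rewrite indicE mem_setE in_itv /=.
    by rewrite grid_index_cell ?mul1r //; case/andP: sI.
  move=> neq; case: (boolP (_ <= s < _)) => [/(grid_index_unique t_gt0) jE|_].
    by move: neq; rewrite -(inj_eq val_inj) /= jE eqxx.
  by rewrite mul0r.
apply: (@prog_measurable_cvg _ step) => [m|s w sI].
  apply: prog_measurable_sum => j; apply: prog_measurableM.
    by apply: prog_measurable_time; apply: measurable_indic; exact: measurable_itv.
  by apply: prog_measurable_state; apply: mX; apply: grid_itv => //; rewrite -ltnS.
under eq_fun do rewrite stepE //.
have gridI m : (`[0, t]%classic : set R) (grid t m (grid_index t m s)).
  by rewrite /= in_itv /= grid_itv // -ltnS grid_index_lt.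
apply: cvg_within_continuous (cX w) _ gridI _; first by rewrite /= in_itv.
by apply: cvg_grid_floor; case/andP: sI.
Qed.

Lemma prog_measurable_pint X t : 0 <= t -> prog_measurable X t ->
  (forall w, lebesgue_measure.-integrable `[0, t] (fun s => (X s w)%:E)) ->
  prog_measurable (pint X) t.
Proof.
move=> t0 mX iX; apply: prog_measurable_continuous => // [u /andP[u0 ut]|w].
  have mXu : measurable_fun (T := (R * filtered_at t)%type)
      (`[0, u] `*` setT) (fun p => X p.1 p.2).
    apply: (measurable_funS _ _ mX) => //.
    by apply: setSX => //; apply: subset_itvl; rewrite bnd_simp.
  exact (measurable_fun_Rintegral_param lebesgue_measure (measurable_itv _) mXu).
exact: parameterized_integral_continuous t0 (iX w).
Qed.

End progressive_measurability.

Section lebesgue_itv.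
Context {R : realType}.
Local Notation mu := (@lebesgue_measure R).

Lemma Rintegral_exprn (k : nat) (s : R) : 0 <= s ->
  \int[mu]_(x in `[0, s]) (x ^+ k) = s ^+ k.+1 / k.+1%:R.
Proof.
rewrite le_eqVlt => /predU1P[<-|s0].
  by rewrite set_itv1 Rintegral_set1 expr0n mul0r.
rewrite /Rintegral (@continuous_FTC2 _ _ (fun x => x ^+ k.+1 / k.+1%:R)) //=.
- by rewrite expr0n mul0r subr0.
- by apply: continuous_in_subspaceT => x _; exact: exprn_continuous.
- split.
  + by move=> x _; apply: derivableM => //; exact: exprn_derivable.
  + apply: cvg_at_right_filter; apply: cvgM; last exact: cvg_cst.
    exact: exprn_continuous.
  + apply: cvg_at_left_filter; apply: cvgM; last exact: cvg_cst.
    exact: exprn_continuous.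
- move=> x _; rewrite derive1Mr //; last exact: exprn_derivable.
  by rewrite exp_derive1 /= mulrAC divff ?mul1r // pnatr_eq0.
Qed.

Lemma continuous_integrable_itv (f : R -> R) t :
  {within `[0, t], continuous f} -> mu.-integrable `[0, t] (EFin \o f).
Proof. by move=> cf; apply: continuous_compact_integrable => //; exact: segment_compact. Qed.

Lemma integrableZl_EFin (f : R -> R) (A : set (measurableTypeR R)) k : measurable A ->
  mu.-integrable A (EFin \o f) -> mu.-integrable A (EFin \o (fun x => k * f x)).
Proof. by move=> mA iF; have := integrableZl mA k iF; apply: eq_integrable => // x _. Qed.

Lemma ge0_le_Rintegral_itv (f : R -> R) s t : 0 <= s <= t ->
  mu.-integrable `[0, t] (EFin \o f) -> (forall x, 0 <= f x) ->
  \int[mu]_(x in `[0, s]) f x <= \int[mu]_(x in `[0, t]) f x.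
Proof.
move=> /andP[s0 st] fint f0; rewrite -subr_ge0.
by rewrite (@Rintegral_itvB _ f (BLeft 0) (BRight t) s) //; exact: Rintegral_ge0.
Qed.

End lebesgue_itv.

Section volterra.
Context {R : realType} {d : measure_display} {Omega : measurableType d}.
Local Notation mu := (@lebesgue_measure R).
Variables (chi : R -> Omega -> R) (eta : R) (Y W : R -> Omega -> R).
Hypothesis eta_ge0 : 0 <= eta.
Hypothesis W_int : loc_integrable W.
Hypothesis W_volterra : forall s w, 0 <= s -> W s w = Y s w - eta * pint W s w.

(* [W + picard_gap k] is the [k]-th Picard iterate of [V |-> Y - eta int_0 V],
   started at [Y]. *)
Fixpoint picard_gap (k : nat) : R -> Omega -> R :=
  if k is k'.+1 then pint (fun s w => - eta * picard_gap k' s w)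
  else pint (fun s w => eta * W s w).

Lemma continuous_picard_gap k w t : 0 <= t ->
  {within `[0, t], continuous (fun s => picard_gap k s w)}.
Proof.
move=> t0; elim: k => [|k IH] /=; apply: (parameterized_integral_continuous t0).
  exact: integrableZl_EFin (measurable_itv _) (W_int w t0).
exact: integrableZl_EFin (measurable_itv _) (continuous_integrable_itv IH).
Qed.

Lemma integrable_picard_gap k w t : 0 <= t ->
  mu.-integrable `[0, t] (EFin \o (fun s => picard_gap k s w)).
Proof. by move=> t0; apply: continuous_integrable_itv; exact: continuous_picard_gap. Qed.

Variable t : R.
Hypothesis t_ge0 : 0 <= t.

Let M w := \int[mu]_(x in `[0, t]) `|W x w|.

Lemma picard_gap_bound k w s : 0 <= s <= t ->
  `|picard_gap k s w| <= M w * eta ^+ k.+1 * (s ^+ k / k`!%:R).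
Proof.
elim: k s => [|k IH] s /andP[s0 st] /=.
  have iWs : mu.-integrable `[0, s] (EFin \o (fun x => W x w)) by exact: W_int.
  rewrite expr0 fact0 divr1 mulr1 expr1 /pint.
  have ietaW := integrableZl_EFin eta (measurable_itv _) iWs.
  apply: le_trans (le_normr_Rintegral _ ietaW) _ => //.
  under eq_Rintegral do rewrite normrM (ger0_norm eta_ge0).
  rewrite RintegralZl //; last exact: integrable_norm.
  rewrite mulrC ler_wpM2r //.
  apply: (ge0_le_Rintegral_itv (f := fun x => `|W x w|)) => //; first by rewrite s0.
  exact: integrable_norm (W_int w t_ge0).
have iD := integrableZl_EFin (- eta) (measurable_itv _) (integrable_picard_gap k w s0).
apply: le_trans (le_normr_Rintegral _ iD) _ => //.
pose C := eta * (M w * eta ^+ k.+1 / k`!%:R).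
have cX : {within `[0, s], continuous (fun x : R => x ^+ k)}.
  exact: continuous_subspaceT (@exprn_continuous _ k).
have step_bound : \int[mu]_(x in `[0, s]) `|- eta * picard_gap k x w|
    <= \int[mu]_(x in `[0, s]) (C * x ^+ k).
  apply: le_Rintegral => //.
  - exact: integrable_norm iD.
  - exact: integrableZl_EFin C (measurable_itv _) (continuous_integrable_itv cX).
  move=> x; rewrite /= in_itv /= => /andP[x0 xs].
  rewrite normrM normrN (ger0_norm eta_ge0).
  apply: le_trans (ler_wpM2l eta_ge0 (IH x _)) _; first by rewrite x0 (le_trans xs st).
  by rewrite /C le_eqVlt; apply/orP; left; apply/eqP; field; rewrite pnatr_eq0 -lt0n fact_gt0.
apply: le_trans step_bound _.
rewrite RintegralZl ?Rintegral_exprn //; last exact: continuous_integrable_itv cX.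
rewrite /C factS natrM (exprS eta k.+1) le_eqVlt; apply/orP; left; apply/eqP; field.
by rewrite nat1r !pnatr_eq0 -!lt0n fact_gt0.
Qed.

Lemma cvg_picard_gap w s : 0 <= s <= t -> (fun k => picard_gap k s w) @ \oo --> 0.
Proof.
move=> sI; pose b k := M w * eta * exp_coeff (eta * s) k.
have bE k : M w * eta ^+ k.+1 * (s ^+ k / k`!%:R) = b k.
  by rewrite /b /exp_coeff /= exprMn exprSr; ring.
have b0 : b @ \oo --> 0.
  rewrite -(mulr0 (M w * eta)); apply: cvgM; first exact: cvg_cst.
  exact: cvg_series_cvg_0 (is_cvg_series_exp_coeff _).
apply: (@squeeze_cvgr _ _ _ _ (fun k => - b k) b) => //.
  by apply: nearW => k; rewrite -ler_norml -bE; exact: picard_gap_bound.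
by rewrite -oppr0; exact: cvgN.
Qed.

Lemma prog_measurable_picard_iterate k : prog_measurable chi Y t ->
  prog_measurable chi (fun s w => W s w + picard_gap k s w) t.
Proof.
move=> mY; elim: k => [|k IH].
  apply: (eq_prog_measurable _ mY) => s w /andP[s0 _].
  by rewrite /= /pint RintegralZl ?(W_volterra w s0) ?subrK //; exact: W_int.
apply: (@eq_prog_measurable _ _ _ _ _ (fun s w => Y s w + - eta * pint
  (fun s w => W s w + picard_gap k s w) s w)).
  move=> s w /andP[s0 _]; rewrite /= /pint RintegralZl; last 2 first.
  - exact: measurable_itv.
  - exact: integrable_picard_gap.
  rewrite RintegralD //; [|exact: W_int|exact: integrable_picard_gap].
  by rewrite (W_volterra w s0) /pint; ring.
apply: prog_measurableD mY _; apply: prog_measurableZ; apply: prog_measurable_pint => // w.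
have mI : measurable (`[0, t]%classic : set (measurableTypeR R)) by exact: measurable_itv.
have := integrableD mI (W_int w t_ge0) (integrable_picard_gap k w t_ge0).
by apply: eq_integrable => // x _ /=; rewrite EFinD.
Qed.

Lemma prog_measurable_volterra : prog_measurable chi Y t -> prog_measurable chi W t.
Proof.
move=> mY; apply: (prog_measurable_cvg (prog_measurable_picard_iterate ^~ mY)) => s w sI.
by rewrite -[X in _ --> X]addr0; apply: cvgD; [exact: cvg_cst|exact: cvg_picard_gap].
Qed.

End volterra.

Section nonanticipating_closure.
Context {R : realType} {d : measure_display} {Omega : measurableType d}.
Variable chi : R -> Omega -> R.
Implicit Types X : R -> Omega -> R.

Lemma nonanticipating_sum (I : Type) (r : seq I) (P : pred I) (X : I -> R -> Omega -> R) :
  (forall i, nonanticipating chi (X i)) ->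
  nonanticipating chi (fun s w => \sum_(i <- r | P i) X i s w).
Proof.
move=> nX; apply/nonanticipatingP => t t0; apply: prog_measurable_sum => i.
exact: (nonanticipatingP chi _).1 (nX i) t t0.
Qed.

Lemma nonanticipatingZ k X : nonanticipating chi X ->
  nonanticipating chi (fun s w => k * X s w).
Proof.
move=> nX; apply/nonanticipatingP => t t0; apply: prog_measurableZ.
exact: (nonanticipatingP chi _).1 nX t t0.
Qed.

Lemma nonanticipating_cst k : nonanticipating chi (fun _ _ => k).
Proof. by apply/nonanticipatingP => t t0; exact: prog_measurable_cst. Qed.

Lemma nonanticipating_continuous_self :
  (forall w, {within [set t | 0 <= t], continuous (fun t => chi t w)}) ->
  nonanticipating chi chi.
Proof.
move=> cchi; apply/nonanticipatingP => t t0; apply: prog_measurable_continuous => //.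
  move=> u /andP[u0 ut] _ B mB; rewrite setTI.
  by apply: sub_sigma_algebra; exists u, B; split => //; rewrite u0.
move=> w; apply: continuous_subspaceW (cchi w).
by move=> s /=; rewrite in_itv /= => /andP[].
Qed.

Lemma loc_integrable_sum (I : Type) (r : seq I) (P : pred I) (X : I -> R -> Omega -> R) :
  (forall i, loc_integrable (X i)) ->
  loc_integrable (fun s w => \sum_(i <- r | P i) X i s w).
Proof.
move=> iX w t t0.
have mI : measurable (`[0, t]%classic : set (measurableTypeR R)) by exact: measurable_itv.
have := integrable_sum mI r (P := P) (h := fun i s => (X i s w)%:E) (fun i _ => iX i w t t0).
by apply: eq_integrable => // x _ /=; rewrite sumEFin.
Qed.

Lemma loc_integrableZ k X : loc_integrable X -> loc_integrable (fun s w => k * X s w).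
Proof. by move=> iX w t t0; exact: integrableZl_EFin k (measurable_itv _) (iX w t t0). Qed.

End nonanticipating_closure.

Lemma nonanticipating_ewf_workload {R : realType} {d : measure_display}
    {Omega : measurableType d} (chi : R -> Omega -> R) eta (theta L W : R -> Omega -> R) :
  (forall w, {within [set t | 0 <= t], continuous (fun t => chi t w)}) -> 0 <= eta ->
  ewf_admissible chi eta theta L W -> nonanticipating chi W.
Proof.
move=> cchi eta0 [[ntheta nL] [iW itheta] WE _ _]; apply/nonanticipatingP => t t0.
pose Y s w := chi s w + (-1) * pint theta s w + L s w.
apply: (prog_measurable_volterra (Y := Y) (eta := eta)) => //.
  by move=> s w s0; rewrite (WE w s s0) /Y; ring.
apply: prog_measurableD; last exact: (nonanticipatingP chi L).1 nL t t0.
apply: prog_measurableD.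
  exact: (nonanticipatingP chi chi).1 (nonanticipating_continuous_self cchi) t t0.
apply: prog_measurableZ; apply: prog_measurable_pint => //.
  exact: (nonanticipatingP chi theta).1 ntheta t t0.
by move=> w; exact: itheta.
Qed.

(* The expected costs integrate functions of [w] that need not be measurable. *)
Lemma ge0_le_integral_nonmeas d (T : measurableType d) (R : realType)
    (m : {measure set T -> \bar R}) (D : set T) (f g : T -> \bar R) :
  (forall x, D x -> (0 <= f x)%E) -> (forall x, D x -> (f x <= g x)%E) ->
  (\int[m]_(x in D) f x <= \int[m]_(x in D) g x)%E.
Proof.
move=> f0 fg; rewrite !ge0_integralE //; last first.
  by move=> x Dx; exact: le_trans (f0 x Dx) (fg x Dx).
apply: ereal_sup_le => _ [h hf <-]; exists h => //= x.
apply: le_trans (hf x) _; rewrite /patch; case: ifPn => // /set_mem Dx.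
exact: fg.
Qed.

Lemma le_limsup_oo {R : realType} (f g : R -> \bar R) :
  (forall t, 0 < t -> (f t <= g t)%E) -> (limsup_oo f <= limsup_oo g)%E.
Proof.
move=> fg; rewrite /limsup_oo !limf_esupE.
apply: le_ereal_inf_tmp => _ [V FV <-].
have FVpos : pinfty_nbhs R (V `&` [set t | 0 < t]).
  by apply: filterI => //; exact: nbhs_pinfty_gt.
apply: le_trans (ereal_inf_lbound _) _; first by exists (V `&` [set t | 0 < t]).
apply: ge_ereal_sup => _ [t [Vt t0] <-].
by apply: le_trans (fg t t0) _; apply: ereal_sup_ubound; exists t.
Qed.

Lemma exists_eq_bigmin {R : realType} n (F : 'I_n.+1 -> R) :
  exists i, \big[Order.min/F ord0]_(j < n.+1) F j = F i.
Proof.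
apply: (big_ind (fun y => exists i, y = F i)) => [|x y [i ->] [j ->]|i _].
- by exists ord0.
- by case: (lerP (F i) (F j)) => _; [exists i|exists j].
- by exists i.
Qed.

Lemma nondecr_from0_ge0 {R : realType} {d : measure_display} {Omega : measurableType d}
    (X : R -> Omega -> R) :
  nondecr_from0 X -> forall w t, 0 <= t -> 0 <= X t w.
Proof. by case=> X0 Xmono w t t0; rewrite -(X0 w); exact: Xmono. Qed.

Section weighted_split.
Context {R : realType} {n : nat}.
Variable alpha : 'I_n.+1 -> R.
Hypothesis alpha_gt0 : forall i, 0 < alpha i.

Lemma alpha_hat_gt0 : 0 < alpha_hat alpha.
Proof.
rewrite /alpha_hat (bigD1 ord0) //= ltr_wpDr ?invr_gt0 //.
by apply: sumr_ge0 => i _; rewrite invr_ge0 ltW.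
Qed.

Lemma weighted_cauchy_schwarz (z : 'I_n.+1 -> R) :
  (\sum_i z i) ^+ 2 / alpha_hat alpha <= \sum_i alpha i * z i ^+ 2.
Proof.
have A0 := alpha_hat_gt0; set A := alpha_hat alpha in A0 *; set S := \sum_i z i.
pose q := S / A.
(* The square below vanishes exactly at the optimal split [z_i = q / alpha_i]. *)
have : 0 <= \sum_i alpha i * (z i - q / alpha i) ^+ 2.
  by apply: sumr_ge0 => i _; rewrite mulr_ge0 ?sqr_ge0 // ltW.
have E i : alpha i * (z i - q / alpha i) ^+ 2 =
    alpha i * z i ^+ 2 - 2 * q * z i + q ^+ 2 * (alpha i)^-1.
  by field; rewrite gt_eqF.
rewrite (eq_bigr _ (fun i _ => E i)) big_split /= big_split /= sumrN -!mulr_sumr.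
rewrite -/S -/(alpha_hat alpha) -/A /q => H.
rewrite -subr_ge0; apply: le_trans H _; rewrite le_eqVlt; apply/orP; left; apply/eqP.
by field; rewrite gt_eqF.
Qed.

Definition weighted_split (theta : R) (i : 'I_n.+1) : R :=
  (alpha i)^-1 / alpha_hat alpha * theta.

Lemma sum_weighted_split theta : \sum_i weighted_split theta i = theta.
Proof.
rewrite /weighted_split -mulr_suml -mulr_suml divff ?mul1r //.
exact: lt0r_neq0 alpha_hat_gt0.
Qed.

Lemma weighted_split_cost theta :
  \sum_i alpha i * weighted_split theta i ^+ 2 = theta ^+ 2 / alpha_hat alpha.
Proof.
have A0 := lt0r_neq0 alpha_hat_gt0.
rewrite (eq_bigr (fun i => (alpha i)^-1 * (theta ^+ 2 / alpha_hat alpha ^+ 2))).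
  by rewrite -mulr_suml -/(alpha_hat alpha); field.
by move=> i _; rewrite /weighted_split; field; rewrite A0 lt0r_neq0.
Qed.

End weighted_split.

Section reduction.
Context {R : realType} {d : measure_display} {Omega : measurableType d}.
Variables (P : probability Omega R) (n : nat) (chi : R -> Omega -> R) (eta : R).
Variables (lam alpha hh c : 'I_n.+1 -> R) (h0 : R).
Hypothesis lam_gt0 : forall i, 0 < lam i.
Hypothesis alpha_gt0 : forall i, 0 < alpha i.
Implicit Types (theta L W : R -> Omega -> R) (Z U zeta : 'I_n.+1 -> R -> Omega -> R).

Definition concentrate (i : 'I_n.+1) (X : R -> Omega -> R) : 'I_n.+1 -> R -> Omega -> R :=
  fun k => if k == i then X else fun _ _ => 0.

Lemma sum_concentrate (a : 'I_n.+1 -> R) i X s w :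
  \sum_k a k * concentrate i X k s w = a i * X s w.
Proof.
rewrite (bigD1 i) //= /concentrate eqxx big1 ?addr0 // => k /negbTE ->.
by rewrite mulr0.
Qed.

Section from_ewf.
Variables (istar jstar : 'I_n.+1) (theta L W : R -> Omega -> R).

Let Zc := concentrate istar W.
Let Uc := concentrate jstar (fun s w => (lam jstar)^-1 * L s w).
Let zetac k s w := weighted_split alpha (theta s w) k.

Lemma rbcp_admissible_of_ewf :
  (forall w, {within [set t | 0 <= t], continuous (fun t => chi t w)}) -> 0 <= eta ->
  ewf_admissible chi eta theta L W -> rbcp_admissible chi eta lam Zc Uc zetac.
Proof.
move=> cchi eta0 adm; have nW := nonanticipating_ewf_workload cchi eta0 adm.
case: adm => [[ntheta nL] [iW itheta] WE W0 [L0 Lmono]].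
have sumZ : (fun s w => \sum_k Zc k s w) = W.
  apply/funext => s; apply/funext => w; have := sum_concentrate (fun=> 1) istar W s w.
  by under eq_bigr do rewrite mul1r; rewrite mul1r.
have sumU s w : \sum_k lam k * Uc k s w = L s w.
  by rewrite sum_concentrate mulrA divff ?mul1r // lt0r_neq0.
have sumzeta : (fun s w => \sum_k zetac k s w) = theta.
  by apply/funext => s; apply/funext => w; exact: sum_weighted_split.
split.
- split; [|split] => k.
  + by rewrite /Zc /concentrate; case: eqP => _; [exact: nW|exact: nonanticipating_cst].
  + rewrite /Uc /concentrate; case: eqP => _; last exact: nonanticipating_cst.
    exact: nonanticipatingZ.
  + exact: nonanticipatingZ.
- by split; [rewrite sumZ|move=> k; exact: loc_integrableZ].
- move=> w t t0; rewrite sumZ sumzeta sumU.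
  by move: (WE w t t0); rewrite -{1}sumZ.
- by move=> k w t t0; rewrite /Zc /concentrate; case: eqP => _ //=; exact: W0.
- move=> k; rewrite /Uc /concentrate; case: eqP => _; split => //= [w|w s t s0 st].
    by rewrite L0 mulr0.
  by apply: ler_wpM2l; [rewrite invr_ge0 ltW|exact: Lmono].
Qed.

Lemma rbcp_cost_of_ewf :
  h_min hh h0 = hh istar - h0 -> r_min c lam = c jstar / lam jstar ->
  rbcp_cost P alpha hh h0 c Zc Uc zetac
  = ewf_cost P (alpha_hat alpha) (h_min hh h0) (r_min c lam) theta L W.
Proof.
move=> hE rE; rewrite /rbcp_cost /ewf_cost; congr limsup_oo; apply: funext => t.
congr (_ * _)%E; apply: eq_integral => w _; congr (_ + _)%E.
  apply: eq_integral => s _; congr EFin; congr (_ + _).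
    exact: weighted_split_cost.
  by rewrite sum_concentrate hE.
by congr EFin; rewrite sum_concentrate rE mulrA.
Qed.

End from_ewf.

Section from_rbcp.
Variables (Z U zeta : 'I_n.+1 -> R -> Omega -> R).
Hypothesis adm : rbcp_admissible chi eta lam Z U zeta.

Let thetaS s w := \sum_i zeta i s w.
Let LS s w := \sum_i lam i * U i s w.
Let WS s w := \sum_i Z i s w.

Lemma ewf_admissible_of_rbcp : ewf_admissible chi eta thetaS LS WS.
Proof.
case: adm => [[nZ [nU nzeta]] [iW izeta] WE Z0 Umon]; split => //.
- split; first exact: nonanticipating_sum.
  by apply: nonanticipating_sum => i; exact: nonanticipatingZ.
- by split => //; exact: loc_integrable_sum.
- by move=> w t t0; apply: sumr_ge0 => i _; exact: Z0.
split => [w|w s t s0 st].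
  by rewrite /LS big1 // => i _; rewrite (proj1 (Umon i)) mulr0.
apply: ler_sum => i _; apply: ler_wpM2l; first exact: ltW.
exact: (proj2 (Umon i)).
Qed.

Lemma ewf_cost_of_rbcp_le : (forall i, h0 < hh i) -> (forall i, 0 <= c i) ->
  (ewf_cost P (alpha_hat alpha) (h_min hh h0) (r_min c lam) thetaS LS WS
   <= rbcp_cost P alpha hh h0 c Z U zeta)%E.
Proof.
move=> hh_gt c_ge0; case: adm => _ _ _ Z0 Umon.
have U0 i w t : 0 <= t -> 0 <= U i t w by exact: nondecr_from0_ge0.
have h_le i : h_min hh h0 <= hh i - h0 by rewrite lerD2r; exact: bigmin_le.
have r_le i : r_min c lam <= c i / lam i by exact: bigmin_le.
have h_ge0 : 0 <= h_min hh h0.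
  by rewrite /h_min; have [i ->] := exists_eq_bigmin hh; rewrite subr_ge0 ltW ?hh_gt.
have r_ge0 : 0 <= r_min c lam.
  rewrite /r_min; have [i ->] := exists_eq_bigmin (fun i => c i / lam i).
  by rewrite divr_ge0 ?c_ge0 ?ltW.
have running_ge0 s w : 0 <= s ->
    0 <= thetaS s w ^+ 2 / alpha_hat alpha + h_min hh h0 * WS s w.
  move=> s0; rewrite addr_ge0 ?divr_ge0 ?sqr_ge0 ?(ltW (alpha_hat_gt0 alpha_gt0)) //.
  by rewrite mulr_ge0 // sumr_ge0 // => i _; exact: Z0.
apply: le_limsup_oo => t t0; apply: lee_wpmul2l; first by rewrite lee_fin invr_ge0 ltW.
apply: ge0_le_integral_nonmeas => w _.
  rewrite adde_ge0 ?lee_fin ?mulr_ge0 ?sumr_ge0 // => [|i _].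
    by apply: integral_ge0 => s; rewrite /= in_itv /= lee_fin => /andP[/running_ge0].
  by rewrite mulr_ge0 ?U0 // ltW.
apply: leeD.
  apply: ge0_le_integral_nonmeas => s; rewrite /= in_itv /= lee_fin => /andP[s0 _].
    exact: running_ge0.
  rewrite lerD ?weighted_cauchy_schwarz // mulr_sumr ler_sum // => i _.
  by rewrite ler_wpM2r ?Z0.
rewrite lee_fin mulr_sumr ler_sum // => i _; rewrite mulrA.
by apply: ler_wpM2r; [exact: U0 (ltW t0)|rewrite -ler_pdivlMr].
Qed.

End from_rbcp.
End reduction.

Unset Implicit Arguments.

Theorem proposition2 (R : realType) (d : measure_display) (Omega : measurableType d)
    (P : probability Omega R) (n : nat) (eta : R) (lam alpha : 'I_n.+1 -> R)
    (h0 : R) (hh c : 'I_n.+1 -> R) (chi : R -> Omega -> R) (a sigma : R) :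
  0 < eta ->
  (forall i, 0 < lam i) ->
  (forall i, 0 < alpha i) ->
  0 <= h0 ->
  (forall i, h0 < hh i) ->
  (forall i, 0 <= c i) ->
  0 < sigma ->
  brownian_motion P chi a sigma ->
  (forall theta L W : R -> Omega -> R,
      ewf_admissible chi eta theta L W ->
      exists Z U zeta : 'I_n.+1 -> R -> Omega -> R,
        rbcp_admissible chi eta lam Z U zeta /\
        rbcp_cost P alpha hh h0 c Z U zeta
        = ewf_cost P (alpha_hat alpha) (h_min hh h0) (r_min c lam) theta L W)
  /\
  (forall Z U zeta : 'I_n.+1 -> R -> Omega -> R,
      rbcp_admissible chi eta lam Z U zeta ->
      exists theta L W : R -> Omega -> R,
        ewf_admissible chi eta theta L W /\
        (ewf_cost P (alpha_hat alpha) (h_min hh h0) (r_min c lam) theta L W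
         <= rbcp_cost P alpha hh h0 c Z U zeta)%E).
Proof.
move=> eta_gt0 lam_gt0 alpha_gt0 _ hh_gt c_ge0 _ [_ _ chi_cont _ _]; split.
- move=> theta L W adm.
  have [istar hE] := exists_eq_bigmin hh.
  have [jstar rE] := exists_eq_bigmin (fun i => c i / lam i).
  exists (concentrate istar W), (concentrate jstar (fun s w => (lam jstar)^-1 * L s w)),
    (fun k s w => weighted_split alpha (theta s w) k); split.
    exact (rbcp_admissible_of_ewf lam_gt0 alpha_gt0 istar jstar chi_cont (ltW eta_gt0) adm).
  by apply: rbcp_cost_of_ewf; rewrite /h_min ?hE.
- move=> Z U zeta adm.
  exists (fun s w => \sum_i zeta i s w), (fun s w => \sum_i lam i * U i s w),
    (fun s w => \sum_i Z i s w); split.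
    exact: ewf_admissible_of_rbcp adm.
  exact (ewf_cost_of_rbcp_le P lam_gt0 alpha_gt0 adm hh_gt c_ge0).
Qed.
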